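(* Let $\alpha\in\mathbb R$ and let $(\mathfrak g_1,\varphi_1,\xi_1,\eta_1,g_1)$ and $(\mathfrak g_2,\varphi_2,\xi_2,\eta_2,g_2)$ be two almost $\alpha$-coK\''ahler (respectively, two $\alpha$-coK\''ahler) Lie algebras. For $i=1,2$ let $\mathfrak h_i=\ker\eta_i$, $J_i=\varphi_i|_{\mathfrak h_i}$, $h_i=g_i|_{\mathfrak h_i\times\mathfrak h_i}$ and $D_i=\mathrm{ad}_{\xi_i}|_{\mathfrak h_i}$, so that $(\mathfrak h_i,J_i,h_i)$ is an almost K\''ahler (respectively, K\''ahler) Lie algebra. Then the two Lie algebras $\mathfrak g_1,\mathfrak g_2$ are isomorphic as (almost) $\alpha$-coK\''ahler Lie algebras if and only if there exists an isomorphism $\psi:(\mathfrak h_1,J_1,h_1)\to(\mathfrak h_2,J_2,h_2)$ of (almost) K\''ahler Lie algebras such that $\psi\circ D_1=D_2\circ\psi$.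
   Context: For a Lie algebra, $d\eta(x,y)=-\eta([x,y])$ and $d\omega(x,y,z)=-\omega([x,y],z)-\omega([y,z],x)-\omega([z,x],y)$. An almost contact metric structure on a $(2n+1)$-dimensional Lie algebra $\mathfrak g$ is $(\varphi,\xi,\eta,g)$ with $\eta(\xi)=1$, $\varphi^2=-I+\eta\otimes\xi$, $\eta\circ\varphi=0$, $g$ positive definite with $g(\varphi x,\varphi y)=g(x,y)-\eta(x)\eta(y)$; $\Phi(x,y)=g(x,\varphi y)$. It is almost $\alpha$-coK\''ahler if $\eta\wedge\Phi^n\neq0$, $d\eta=0$, $d\Phi=2\alpha\,\eta\wedge\Phi$, and $\alpha$-coK\''ahler if moreover $N_\varphi+2d\eta\otimes\xi=0$, with $N_\varphi(x,y)=\varphi^2[x,y]+[\varphi x,\varphi y]-\varphi[\varphi x,y]-\varphi[x,\varphi y]$. An almost K\''ahler structure on a $2n$-dimensional Lie algebra is $(J,h)$, $J^2=-I$, $h$ positive definite with $h(Jx,Jy)=h(x,y)$ and $h(x,Jy)$ closed nondegenerate; K\''ahler if also $N_J=0$. Two (almost) $\alpha$-coK\''ahler Lie algebras are isomorphic if there is a Lie algebra isomorphism $\Psi:\mathfrak g_1\to\mathfrak g_2$ with $\Psi\circ\varphi_1=\varphi_2\circ\Psi$, $\eta_2\circ\Psi=\eta_1$, $\Psi\xi_1=\xi_2$ and $\Psi^*g_2=g_1$. Two (almost) K\''ahler Lie algebras are isomorphic via a Lie algebra isomorphism $\psi$ with $\psi\circ J_1=J_2\circ\psi$ and $\psi^*h_2=h_1$.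 *)

From HB Require Import structures.
From mathcomp Require Import all_boot all_order all_algebra all_fingroup.
From mathcomp Require Import reals.
Set Implicit Arguments. Unset Strict Implicit. Unset Printing Implicit Defensive.
Import Order.TTheory GRing.Theory Num.Theory.
Local Open Scope ring_scope.

(* Real Lie algebras are modelled as finite-dimensional real vector spaces
   (vectType R, R : realType) equipped with a bracket. *)

Section Defs.
Variable R : realType.

Definition linmap (U W : lmodType R) (f : U -> W) : Prop :=
  forall (a : R) x y, f (a *: x + y) = a *: f x + f y.

Section OneAlgebra.
Variable V : vectType R.

Definition lie_bracket (br : V -> V -> V) : Prop :=
  (forall (a : R) x y z, br (a *: x + y) z = a *: br x z + br y z) /\
  (forall (a : R) x y z, br z (a *: x + y) = a *: br z x + br z y) /\
  (forall x, br x x = 0) /\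
  (forall x y z, br x (br y z) + br y (br z x) + br z (br x y) = 0).

Record acm_structure (phi : V -> V) (xi : V) (eta : V -> R) (g : V -> V -> R)
  : Prop := {
  acm_phi_lin : linmap phi;
  acm_eta_lin : linmap (eta : V -> R^o);
  acm_g_lin : forall (a : R) x y z, g (a *: x + y) z = a * g x z + g y z;
  acm_g_sym : forall x y, g x y = g y x;
  acm_g_pos : forall x, x != 0 -> 0 < g x x;
  acm_eta_xi : eta xi = 1;
  acm_phi2 : forall x, phi (phi x) = - x + eta x *: xi;
  acm_eta_phi : forall x, eta (phi x) = 0;
  acm_compat : forall x y, g (phi x) (phi y) = g x y - eta x * eta y
}.

Definition fund_form (phi : V -> V) (g : V -> V -> R) (x y : V) : R := g x (phi y).

(* (eta /\ Phi^n)(x_0,...,x_2n), up to a nonzero normalising constant *)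
Definition eta_wedge_Phi_pow (n : nat) (eta : V -> R) (Phi : V -> V -> R)
  (x : 'I_(n.*2.+1) -> V) : R :=
  \sum_(s : 'S_(n.*2.+1))
     (-1) ^+ s * (eta (x (s ord0)) *
        \prod_(k < n) Phi (x (s (inord k.*2.+1))) (x (s (inord k.*2.+2)))).

Definition d1 (br : V -> V -> V) (eta : V -> R) (x y : V) : R := - eta (br x y).

Definition d2 (br : V -> V -> V) (om : V -> V -> R) (x y z : V) : R :=
  - om (br x y) z - om (br y z) x - om (br z x) y.

Definition wedge12 (eta : V -> R) (om : V -> V -> R) (x y z : V) : R :=
  eta x * om y z + eta y * om z x + eta z * om x y.

Definition nijenhuis (br : V -> V -> V) (phi : V -> V) (x y : V) : V :=
  phi (phi (br x y)) + br (phi x) (phi y) - phi (br (phi x) y) - phi (br x (phi y)).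

Definition almost_alpha_coKahler (alpha : R) (n : nat) (br : V -> V -> V)
  (phi : V -> V) (xi : V) (eta : V -> R) (g : V -> V -> R) : Prop :=
  [/\ \dim (fullv : {vspace V}) = n.*2.+1,
      acm_structure phi xi eta g,
      (exists x, @eta_wedge_Phi_pow n eta (fund_form phi g) x != 0),
      (forall x y, d1 br eta x y = 0) &
      (forall x y z, d2 br (fund_form phi g) x y z
                     = 2 * alpha * wedge12 eta (fund_form phi g) x y z)].

Definition alpha_coKahler (alpha : R) (n : nat) (br : V -> V -> V)
  (phi : V -> V) (xi : V) (eta : V -> R) (g : V -> V -> R) : Prop :=
  almost_alpha_coKahler alpha n br phi xi eta g /\
  (forall x y, nijenhuis br phi x y + (2 * d1 br eta x y) *: xi = 0).

End OneAlgebra.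

Definition coKahler_iso (V1 V2 : vectType R)
  (br1 : V1 -> V1 -> V1) (phi1 : V1 -> V1) (xi1 : V1) (eta1 : V1 -> R) (g1 : V1 -> V1 -> R)
  (br2 : V2 -> V2 -> V2) (phi2 : V2 -> V2) (xi2 : V2) (eta2 : V2 -> R) (g2 : V2 -> V2 -> R)
  : Prop :=
  exists Psi : V1 -> V2,
    [/\ linmap Psi, bijective Psi,
        forall x y, Psi (br1 x y) = br2 (Psi x) (Psi y),
        forall x, Psi (phi1 x) = phi2 (Psi x) &
        [/\ forall x, eta2 (Psi x) = eta1 x,
            Psi xi1 = xi2 &
            forall x y, g2 (Psi x) (Psi y) = g1 x y]].

(* The map psi : h1 -> h2
   is represented by a function V1 -> V2 whose behaviour on ker eta1 is all that
   is constrained. *)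
Definition kahler_iso_D (V1 V2 : vectType R)
  (br1 : V1 -> V1 -> V1) (phi1 : V1 -> V1) (xi1 : V1) (eta1 : V1 -> R) (g1 : V1 -> V1 -> R)
  (br2 : V2 -> V2 -> V2) (phi2 : V2 -> V2) (xi2 : V2) (eta2 : V2 -> R) (g2 : V2 -> V2 -> R)
  : Prop :=
  exists psi : V1 -> V2,
    [/\
        forall x, eta1 x = 0 -> eta2 (psi x) = 0,
        forall (a : R) x y, eta1 x = 0 -> eta1 y = 0 ->
          psi (a *: x + y) = a *: psi x + psi y,
        (forall x y, eta1 x = 0 -> eta1 y = 0 -> psi x = psi y -> x = y) /\
        (forall y, eta2 y = 0 -> exists2 x, eta1 x = 0 & psi x = y),
        forall x y, eta1 x = 0 -> eta1 y = 0 -> psi (br1 x y) = br2 (psi x) (psi y) &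
        [/\
            forall x, eta1 x = 0 -> psi (phi1 x) = phi2 (psi x),
            forall x y, eta1 x = 0 -> eta1 y = 0 -> g2 (psi x) (psi y) = g1 x y &
            forall x, eta1 x = 0 -> psi (br1 xi1 x) = br2 xi2 (psi x)]].

End Defs.

From HB Require Import structures.
From mathcomp Require Import all_boot all_order all_algebra all_fingroup.
From mathcomp Require Import reals.
Set Implicit Arguments. Unset Strict Implicit. Unset Printing Implicit Defensive.
Import GRing.Theory.
Local Open Scope ring_scope.

(* Since d eta = 0, eta kills all brackets, so h = ker eta is an ideal and
   g = h + R xi with [xi, u] = D u.  An isomorphism of the contact data preserves
   h and fixes xi, hence restricts to an isomorphism of the Kaehler data that
   commutes with D.  Conversely an isomorphism psi of the Kaehler data commuting
   with D extends by xi1 |-> xi2: writing x = u + a xi, the bracket, phi and g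
   are determined by their values on h together with D, phi xi = 0 and
   g(u, xi) = eta u. *)

Lemma inj_surj_bijective (T : choiceType) (U : eqType) (f : T -> U) :
  injective f -> (forall y, exists x, f x = y) -> bijective f.
Proof.
move=> f_inj f_surj.
have exP y : exists x, f x == y by have [x <-] := f_surj y; exists x.
exists (fun y => xchoose (exP y)) => [x|y]; last exact/eqP/(xchooseP (exP y)).
by apply: f_inj; apply/eqP/(xchooseP (exP (f x))).
Qed.

Section LinearMaps.
Variables (R : realType) (U W : lmodType R) (f : U -> W).
Hypothesis f_lin : linmap f.

Lemma linmapD x y : f (x + y) = f x + f y.
Proof. by have := f_lin 1 x y; rewrite !scale1r. Qed.

Lemma linmap0 : f 0 = 0.
Proof. by apply/(addrI (f 0)); rewrite -linmapD !addr0. Qed.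

Lemma linmapZ a x : f (a *: x) = a *: f x.
Proof. by have := f_lin a x 0; rewrite !addr0 linmap0 addr0. Qed.

Lemma linmapN x : f (- x) = - f x.
Proof. by rewrite -scaleN1r linmapZ scaleN1r. Qed.

Lemma linmapB x y : f (x - y) = f x - f y.
Proof. by rewrite linmapD linmapN. Qed.

End LinearMaps.

Section LinearForms.
Variables (R : realType) (U : lmodType R) (f : U -> R).
Hypothesis f_lin : linmap (f : U -> R^o).

Lemma linformD x y : f (x + y) = f x + f y.
Proof. exact: (linmapD f_lin). Qed.

Lemma linformZ a x : f (a *: x) = a * f x.
Proof. exact: (linmapZ f_lin). Qed.

Lemma linformB x y : f (x - y) = f x - f y.
Proof. exact: (linmapB f_lin). Qed.

End LinearForms.

Section LieBracket.
Variables (R : realType) (V : vectType R) (br : V -> V -> V).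
Hypothesis br_lie : lie_bracket br.

Lemma lie_linl z : linmap (br^~ z).
Proof. by case: br_lie => brl _ a x y; apply: brl. Qed.

Lemma lie_linr z : linmap (br z).
Proof. by case: br_lie => _ [brr _] a x y; apply: brr. Qed.

Lemma lie_brxx x : br x x = 0.
Proof. by case: br_lie => _ [_ []]. Qed.

Lemma lie_brC x y : br x y = - br y x.
Proof.
apply/eqP; rewrite -addr_eq0 eq_sym -(lie_brxx (x + y)).
by rewrite (linmapD (lie_linl _)) !(linmapD (lie_linr _)) !lie_brxx add0r addr0.
Qed.

Lemma lie_br_add_scaled u v w a b :
  br (u + a *: w) (v + b *: w) = br u v + (a *: br w v + b *: br u w).
Proof.
rewrite (linmapD (lie_linl _)) !(linmapD (lie_linr _)) !(linmapZ (lie_linl _)).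
rewrite !(linmapZ (lie_linr _)) lie_brxx !scaler0 addr0.
by rewrite -addrA [b *: _ + _]addrC.
Qed.

End LieBracket.

Definition horizontal (R : realType) (V : vectType R) (eta : V -> R) (xi : V) (x : V) : V :=
  x - eta x *: xi.

Section AlmostContactMetric.
Variables (R : realType) (V : vectType R).
Variables (phi : V -> V) (xi : V) (eta : V -> R) (g : V -> V -> R).
Hypothesis acm : acm_structure phi xi eta g.

Let eta_lin := acm_eta_lin acm.

Lemma acm_g_linl z : linmap ((g^~ z) : V -> R^o).
Proof. by move=> a x y; apply: (acm_g_lin acm). Qed.

Lemma acm_g_linr z : linmap (g z : V -> R^o).
Proof. by move=> a x y; rewrite /= !(acm_g_sym acm z); apply: (acm_g_lin acm). Qed.

Lemma acm_phi_xi : phi xi = 0.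
Proof.
have phi2_xi : phi (phi xi) = 0.
  by rewrite (acm_phi2 acm) (acm_eta_xi acm) scale1r addNr.
have := acm_phi2 acm (phi xi).
rewrite phi2_xi (linmap0 (acm_phi_lin acm)) (acm_eta_phi acm) scale0r addr0.
by move/eqP; rewrite eq_sym oppr_eq0 => /eqP.
Qed.

Lemma acm_g_xi x : g x xi = eta x.
Proof.
have := acm_compat acm x xi; rewrite acm_phi_xi (acm_eta_xi acm) mulr1.
by rewrite (linmap0 (acm_g_linr _)) => /eqP; rewrite eq_sym subr_eq0 => /eqP.
Qed.

Lemma eta_horizontal x : eta (horizontal eta xi x) = 0.
Proof. by rewrite (linformB eta_lin) (linformZ eta_lin) (acm_eta_xi acm) mulr1 subrr. Qed.

Lemma acm_splitting x : exists u a, eta u = 0 /\ x = u + a *: xi.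
Proof.
by exists (horizontal eta xi x), (eta x); split; [exact: eta_horizontal | rewrite subrK].
Qed.

Lemma acm_eta_add_scaled u a : eta u = 0 -> eta (u + a *: xi) = a.
Proof.
move=> eta_u; rewrite (linformD eta_lin) (linformZ eta_lin).
by rewrite eta_u (acm_eta_xi acm) add0r mulr1.
Qed.

Lemma horizontal_add_scaled u a : eta u = 0 -> horizontal eta xi (u + a *: xi) = u.
Proof. by move=> eta_u; rewrite /horizontal acm_eta_add_scaled // addrK. Qed.

Lemma acm_g_add_scaled u v a b : eta u = 0 -> eta v = 0 ->
  g (u + a *: xi) (v + b *: xi) = g u v + a * b.
Proof.
move=> eta_u eta_v.
rewrite (linformD (acm_g_linl _)) !(linformD (acm_g_linr _)) !(linformZ (acm_g_linl _)).
rewrite !(linformZ (acm_g_linr _)) !acm_g_xi (acm_g_sym acm xi) !acm_g_xi.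
by rewrite eta_u eta_v (acm_eta_xi acm) mulr1 !mulr0 addr0 add0r.
Qed.

End AlmostContactMetric.

Section TwoStructures.
Variables (R : realType) (V1 V2 : vectType R).
Variables (br1 : V1 -> V1 -> V1) (phi1 : V1 -> V1) (xi1 : V1).
Variables (eta1 : V1 -> R) (g1 : V1 -> V1 -> R).
Variables (br2 : V2 -> V2 -> V2) (phi2 : V2 -> V2) (xi2 : V2).
Variables (eta2 : V2 -> R) (g2 : V2 -> V2 -> R).

Lemma coKahler_iso_restrict :
  coKahler_iso br1 phi1 xi1 eta1 g1 br2 phi2 xi2 eta2 g2 ->
  kahler_iso_D br1 phi1 xi1 eta1 g1 br2 phi2 xi2 eta2 g2.
Proof.
case=> Psi [Psi_lin [Q PsiK QK] Psi_br Psi_phi [Psi_eta Psi_xi Psi_g]].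
exists Psi; split=> [x eta_x | a x y _ _ | | x y _ _ | ].
- by rewrite Psi_eta.
- exact: Psi_lin.
- split=> [x y _ _ /(can_inj PsiK) // | y eta_y].
  by exists (Q y); rewrite ?QK // -Psi_eta QK.
- exact: Psi_br.
- by split=> [x _ | x y _ _ | x _]; rewrite ?Psi_phi ?Psi_g ?Psi_br ?Psi_xi.
Qed.

Section KahlerIsoExtension.
Hypotheses (lie1 : lie_bracket br1) (lie2 : lie_bracket br2).
Hypotheses (acm1 : acm_structure phi1 xi1 eta1 g1) (acm2 : acm_structure phi2 xi2 eta2 g2).
Hypothesis eta1_br : forall x y, eta1 (br1 x y) = 0.

Variable psi : V1 -> V2.
Hypothesis psi_ker : forall x, eta1 x = 0 -> eta2 (psi x) = 0.
Hypothesis psi_lin : forall (a : R) x y, eta1 x = 0 -> eta1 y = 0 ->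
  psi (a *: x + y) = a *: psi x + psi y.
Hypothesis psi_inj : forall x y, eta1 x = 0 -> eta1 y = 0 -> psi x = psi y -> x = y.
Hypothesis psi_surj : forall y, eta2 y = 0 -> exists2 x, eta1 x = 0 & psi x = y.
Hypothesis psi_br : forall x y, eta1 x = 0 -> eta1 y = 0 ->
  psi (br1 x y) = br2 (psi x) (psi y).
Hypothesis psi_phi : forall x, eta1 x = 0 -> psi (phi1 x) = phi2 (psi x).
Hypothesis psi_g : forall x y, eta1 x = 0 -> eta1 y = 0 -> g2 (psi x) (psi y) = g1 x y.
Hypothesis psi_D : forall x, eta1 x = 0 -> psi (br1 xi1 x) = br2 xi2 (psi x).

Let eta1_lin := acm_eta_lin acm1.

Lemma eta1_0 : eta1 0 = 0.
Proof. exact: (linmap0 eta1_lin). Qed.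

Lemma psi_kerD x y : eta1 x = 0 -> eta1 y = 0 -> psi (x + y) = psi x + psi y.
Proof. by move=> eta_x eta_y; have := psi_lin 1 eta_x eta_y; rewrite !scale1r. Qed.

Lemma psi_0 : psi 0 = 0.
Proof. by apply/(addrI (psi 0)); rewrite -psi_kerD ?eta1_0 // !addr0. Qed.

Lemma psi_kerZ a x : eta1 x = 0 -> psi (a *: x) = a *: psi x.
Proof. by move=> eta_x; have := psi_lin a eta_x eta1_0; rewrite !addr0 psi_0 addr0. Qed.

Lemma psi_D_swap x : eta1 x = 0 -> psi (br1 x xi1) = br2 (psi x) xi2.
Proof.
by move=> eta_x; rewrite (lie_brC lie1) (lie_brC lie2) -!scaleN1r psi_kerZ ?psi_D.
Qed.

Definition psi_ext (x : V1) : V2 := psi (horizontal eta1 xi1 x) + eta1 x *: xi2.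

Lemma psi_ext_add_scaled u a : eta1 u = 0 -> psi_ext (u + a *: xi1) = psi u + a *: xi2.
Proof.
by move=> eta_u; rewrite /psi_ext (horizontal_add_scaled acm1) ?(acm_eta_add_scaled acm1).
Qed.

Lemma psi_ext_ker x : eta1 x = 0 -> psi_ext x = psi x.
Proof.
by move=> eta_x; rewrite /psi_ext /horizontal eta_x !scale0r subr0 addr0.
Qed.

Lemma psi_ext_xi : psi_ext xi1 = xi2.
Proof. by rewrite -[xi1]add0r -[xi1]scale1r psi_ext_add_scaled ?eta1_0 // psi_0 add0r scale1r. Qed.

Lemma eta2_psi_ext x : eta2 (psi_ext x) = eta1 x.
Proof.
have [u [a [eta_u ->]]] := acm_splitting acm1 x.
by rewrite psi_ext_add_scaled // (acm_eta_add_scaled acm2) ?(acm_eta_add_scaled acm1) ?psi_ker.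
Qed.

Lemma psi_ext_lin : linmap psi_ext.
Proof.
move=> a x y.
have [u [b [eta_u ->]]] := acm_splitting acm1 x.
have [v [c [eta_v ->]]] := acm_splitting acm1 y.
have -> : a *: (u + b *: xi1) + (v + c *: xi1) = (a *: u + v) + (a * b + c) *: xi1.
  by rewrite scalerDr scalerA addrACA scalerDl.
rewrite !psi_ext_add_scaled ?psi_lin //; last first.
  by rewrite (linformD eta1_lin) (linformZ eta1_lin) eta_u eta_v mulr0 addr0.
by rewrite scalerDr scalerA addrACA scalerDl.
Qed.

Lemma psi_ext_bij : bijective psi_ext.
Proof.
apply: inj_surj_bijective => [x y|y].
  have [u [a [eta_u ->]]] := acm_splitting acm1 x.
  have [v [b [eta_v ->]]] := acm_splitting acm1 y.
  move=> eq_ext; have eq_ab : a = b.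
    by rewrite -(acm_eta_add_scaled acm1 a eta_u) -eta2_psi_ext eq_ext eta2_psi_ext
      (acm_eta_add_scaled acm1).
  move: eq_ext; rewrite -eq_ab !psi_ext_add_scaled // => /addIr eq_psi.
  by rewrite (psi_inj eta_u eta_v eq_psi).
have [w [b [eta_w ->]]] := acm_splitting acm2 y.
have [u eta_u <-] := psi_surj eta_w.
by exists (u + b *: xi1); rewrite psi_ext_add_scaled.
Qed.

Lemma psi_ext_br x y : psi_ext (br1 x y) = br2 (psi_ext x) (psi_ext y).
Proof.
rewrite psi_ext_ker //.
have [u [a [eta_u ->]]] := acm_splitting acm1 x.
have [v [b [eta_v ->]]] := acm_splitting acm1 y.
rewrite !psi_ext_add_scaled // !lie_br_add_scaled //.
have eta1_brZ c w z : eta1 (c *: br1 w z) = 0 by rewrite (linformZ eta1_lin) eta1_br mulr0.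
rewrite !psi_kerD ?psi_kerZ ?psi_D ?psi_D_swap ?psi_br //.
by rewrite (linformD eta1_lin) !eta1_brZ addr0.
Qed.

Lemma psi_ext_phi x : psi_ext (phi1 x) = phi2 (psi_ext x).
Proof.
have [u [a [eta_u ->]]] := acm_splitting acm1 x.
rewrite psi_ext_add_scaled // (linmapD (acm_phi_lin acm1)) (linmapD (acm_phi_lin acm2)).
rewrite (linmapZ (acm_phi_lin acm1)) (linmapZ (acm_phi_lin acm2)).
rewrite (acm_phi_xi acm1) (acm_phi_xi acm2) !scaler0 !addr0.
by rewrite psi_ext_ker ?psi_phi // (acm_eta_phi acm1).
Qed.

Lemma psi_ext_g x y : g2 (psi_ext x) (psi_ext y) = g1 x y.
Proof.
have [u [a [eta_u ->]]] := acm_splitting acm1 x.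
have [v [b [eta_v ->]]] := acm_splitting acm1 y.
by rewrite !psi_ext_add_scaled // (acm_g_add_scaled acm2) ?psi_ker
  ?(acm_g_add_scaled acm1) ?psi_g.
Qed.

Lemma psi_ext_coKahler_iso : coKahler_iso br1 phi1 xi1 eta1 g1 br2 phi2 xi2 eta2 g2.
Proof.
exists psi_ext; split; [exact: psi_ext_lin | exact: psi_ext_bij | exact: psi_ext_br
  | exact: psi_ext_phi | split; [exact: eta2_psi_ext | exact: psi_ext_xi | exact: psi_ext_g]].
Qed.

End KahlerIsoExtension.

Lemma kahler_iso_D_extend :
  lie_bracket br1 -> lie_bracket br2 ->
  acm_structure phi1 xi1 eta1 g1 -> acm_structure phi2 xi2 eta2 g2 ->
  (forall x y, eta1 (br1 x y) = 0) ->
  kahler_iso_D br1 phi1 xi1 eta1 g1 br2 phi2 xi2 eta2 g2 ->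
  coKahler_iso br1 phi1 xi1 eta1 g1 br2 phi2 xi2 eta2 g2.
Proof.
move=> lie1 lie2 acm1 acm2 eta1_br [psi [psi_ker psi_lin [psi_inj psi_surj] psi_br]].
by case=> psi_phi psi_g psi_D; apply: (psi_ext_coKahler_iso lie1 lie2 acm1 acm2 eta1_br
  psi_ker psi_lin psi_inj psi_surj psi_br psi_phi psi_g psi_D).
Qed.

Lemma almost_coKahler_iso_iff (alpha : R) (n1 n2 : nat) :
  lie_bracket br1 -> lie_bracket br2 ->
  almost_alpha_coKahler alpha n1 br1 phi1 xi1 eta1 g1 ->
  almost_alpha_coKahler alpha n2 br2 phi2 xi2 eta2 g2 ->
  coKahler_iso br1 phi1 xi1 eta1 g1 br2 phi2 xi2 eta2 g2 <->
  kahler_iso_D br1 phi1 xi1 eta1 g1 br2 phi2 xi2 eta2 g2.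
Proof.
move=> lie1 lie2 [_ acm1 _ d_eta1 _] [_ acm2 _ _ _].
split; first exact: coKahler_iso_restrict.
apply: kahler_iso_D_extend => // x y.
by apply/eqP; rewrite -oppr_eq0 -/(d1 br1 eta1 x y) d_eta1.
Qed.

End TwoStructures.

Theorem mainTheorem9 (R : realType) (alpha : R) (n1 n2 : nat)
  (V1 : vectType R) (br1 : V1 -> V1 -> V1) (phi1 : V1 -> V1) (xi1 : V1)
  (eta1 : V1 -> R) (g1 : V1 -> V1 -> R)
  (V2 : vectType R) (br2 : V2 -> V2 -> V2) (phi2 : V2 -> V2) (xi2 : V2)
  (eta2 : V2 -> R) (g2 : V2 -> V2 -> R) :
  lie_bracket br1 -> lie_bracket br2 ->
  ((almost_alpha_coKahler alpha n1 br1 phi1 xi1 eta1 g1 ->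
    almost_alpha_coKahler alpha n2 br2 phi2 xi2 eta2 g2 ->
    (coKahler_iso br1 phi1 xi1 eta1 g1 br2 phi2 xi2 eta2 g2 <->
     kahler_iso_D br1 phi1 xi1 eta1 g1 br2 phi2 xi2 eta2 g2)) /\
   (alpha_coKahler alpha n1 br1 phi1 xi1 eta1 g1 ->
    alpha_coKahler alpha n2 br2 phi2 xi2 eta2 g2 ->
    (coKahler_iso br1 phi1 xi1 eta1 g1 br2 phi2 xi2 eta2 g2 <->
     kahler_iso_D br1 phi1 xi1 eta1 g1 br2 phi2 xi2 eta2 g2))).
Proof.
move=> lie1 lie2; split; first exact: almost_coKahler_iso_iff.
by move=> [almost1 _] [almost2 _]; exact: almost_coKahler_iso_iff almost1 almost2.
Qed.
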